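(* Let $\xi>0$ be real, let $b\ge0$ and $N\ge2$ be integers, and for integers $0\le d\le N-1$ and $0\le l\le 2d$ put \begin{equation*} f_{d,l} = \exp\left(\frac{(2b+1)(d^2+d)\xi}{2N}\right) \cdot 2\sinh\left(\frac{(2d+1)\xi}{2N}\right) \cdot \prod_{k=1}^{l}4 \sinh\left(\frac{(2d+1+k)\xi}{2N}\right) \sinh\left(\frac{(2d+1-k)\xi}{2N}\right). \end{equation*} Then for all integers $l,d$ with $0\le d\le N-2$ and $0\le l\le2d$ we have $f_{d,l}<f_{N-1,l}$. *)

From Stdlib Require Import Reals.
Open Scope R_scope.

Fixpoint prod_1_to (l : nat) (g : nat -> R) : R :=
  match l with
  | O => 1
  | S l' => prod_1_to l' g * g (S l')
  end.

Definition f_dl (xi : R) (b N d l : nat) : R :=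
  exp ((2 * INR b + 1) * (INR d ^ 2 + INR d) * xi / (2 * INR N))
  * (2 * sinh ((2 * INR d + 1) * xi / (2 * INR N)))
  * prod_1_to l (fun k =>
      4 * sinh ((2 * INR d + 1 + INR k) * xi / (2 * INR N))
        * sinh ((2 * INR d + 1 - INR k) * xi / (2 * INR N))).

(* Every factor of [f_dl] is positive, and all of them are nondecreasing in [d]
   (the first two strictly): the arguments of [exp] and of the [sinh]'s grow
   with [d], and the condition [l <= 2 d] keeps every [sinh] argument positive.
   Hence [f_dl] is strictly increasing in [d], and [d < N - 1]. *)

From Stdlib Require Import Reals Lra Lia.
Open Scope R_scope.

Lemma sinh_pos (x : R) : 0 < x -> 0 < sinh x.
Proof. intros Hx; rewrite <- sinh_0; apply sinh_lt, Hx. Qed.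

Lemma prod_1_to_le (l : nat) (g h : nat -> R) :
  (forall k, (1 <= k <= l)%nat -> 0 < g k <= h k) ->
  0 < prod_1_to l g <= prod_1_to l h.
Proof.
  induction l as [|l IH]; intros Hgh; simpl; [lra|].
  assert (Hl : 0 < prod_1_to l g <= prod_1_to l h) by (apply IH; intros; apply Hgh; lia).
  assert (HSl : 0 < g (S l) <= h (S l)) by (apply Hgh; lia).
  split; [apply Rmult_lt_0_compat | apply Rmult_le_compat]; lra.
Qed.

Lemma Rmult3_lt_compat (a a' b b' c c' : R) :
  0 < a < a' -> 0 < b < b' -> 0 < c <= c' -> a * b * c < a' * b' * c'.
Proof.
  intros Ha Hb Hc.
  assert (Hab : a * b < a' * b') by (apply Rmult_le_0_lt_compat; lra).
  assert (0 < a * b) by (apply Rmult_lt_0_compat; lra).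
  apply Rlt_le_trans with (a' * b' * c);
    [apply Rmult_lt_compat_r | apply Rmult_le_compat_l]; lra.
Qed.

Section Scaled.

Variables (xi M : R).
Hypotheses (Hxi : 0 < xi) (HM : 0 < M).

Lemma scaled_pos (a : R) : 0 < a -> 0 < a * xi / M.
Proof.
  intros Ha; unfold Rdiv.
  apply Rmult_lt_0_compat; [apply Rmult_lt_0_compat | apply Rinv_0_lt_compat]; lra.
Qed.

Lemma scaled_lt (a a' : R) : a < a' -> a * xi / M < a' * xi / M.
Proof.
  intros Ha; unfold Rdiv.
  apply Rmult_lt_compat_r; [apply Rinv_0_lt_compat; lra | apply Rmult_lt_compat_r; lra].
Qed.

Lemma sinh_scaled_pos_lt (a a' : R) :
  0 < a < a' -> 0 < sinh (a * xi / M) < sinh (a' * xi / M).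
Proof. intros Ha; split; [apply sinh_pos, scaled_pos | apply sinh_lt, scaled_lt]; lra. Qed.

End Scaled.

Lemma f_dl_lt (xi : R) (b N d d' l : nat) :
  0 < xi -> (0 < N)%nat -> (d < d')%nat -> (l <= 2 * d)%nat ->
  f_dl xi b N d l < f_dl xi b N d' l.
Proof.
  intros Hxi HN Hdd' Hl.
  assert (HM : 0 < 2 * INR N) by (apply lt_0_INR in HN; lra).
  assert (Hd : 0 <= INR d) by apply pos_INR.
  assert (Hd' : INR d + 1 <= INR d') by (rewrite <- S_INR; apply le_INR; lia).
  assert (Hb : 0 <= INR b) by apply pos_INR.
  unfold f_dl; apply Rmult3_lt_compat.
  - split; [apply exp_pos | apply exp_increasing, scaled_lt; auto].
    apply Rmult_lt_compat_l; nra.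
  - assert (Hs := sinh_scaled_pos_lt xi (2 * INR N) Hxi HM (2 * INR d + 1) (2 * INR d' + 1)).
    lra.
  - apply prod_1_to_le; intros k Hk.
    assert (Hk0 : 1 <= INR k) by (apply (le_INR 1); lia).
    assert (Hkd : INR k <= INR (2 * d)) by (apply le_INR; lia).
    rewrite mult_INR in Hkd; simpl in Hkd.
    assert (Hp := sinh_scaled_pos_lt xi (2 * INR N) Hxi HM
                    (2 * INR d + 1 + INR k) (2 * INR d' + 1 + INR k)).
    assert (Hm := sinh_scaled_pos_lt xi (2 * INR N) Hxi HM
                    (2 * INR d + 1 - INR k) (2 * INR d' + 1 - INR k)).
    split; [apply Rmult_lt_0_compat; lra|].
    apply Rmult_le_compat; try lra; apply Rmult_le_pos; lra.
Qed.

Theorem corollary3p2 (xi : R) (b N : nat) :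
  0 < xi -> (2 <= N)%nat ->
  forall d l : nat, (d <= N - 2)%nat -> (l <= 2 * d)%nat ->
    f_dl xi b N d l < f_dl xi b N (N - 1) l.
Proof.
  intros Hxi HN d l Hd Hl.
  apply f_dl_lt; [exact Hxi | lia | lia | exact Hl].
Qed.
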